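(* For every $n\geqslant 2$, $|\mathcal{AO}_n|=\binom{2n}{n}-\left\lfloor\frac{1}{2}n^2\right\rfloor$.
   Context: Let $\Omega_n=\{1<2<\cdots<n\}$. $\mathcal{I}_n$ denotes the symmetric inverse monoid of all partial injective maps of $\Omega_n$. $\mathcal{AI}_n$ is the set of all $\alpha\in\mathcal{I}_n$ such that $\alpha=\sigma|_{\mathrm{Dom}(\alpha)}$ for some even permutation $\sigma$ of $\Omega_n$. $\mathcal{POI}_n$ is the set of order-preserving elements of $\mathcal{I}_n$, and $\mathcal{AO}_n=\mathcal{AI}_n\cap\mathcal{POI}_n$. *)

From mathcomp Require Import all_boot all_order all_fingroup.
Set Implicit Arguments. Unset Strict Implicit. Unset Printing Implicit Defensive.

(* Omega_n = {1 < ... < n} is represented by 'I_n = {0 < ... < n-1}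
   (an order-isomorphic relabelling).  A partial map of Omega_n is a
   finite function 'I_n -> option 'I_n; None means "undefined". *)
Definition pmap n := {ffun 'I_n -> option 'I_n}.

Definition dom n (a : pmap n) : {set 'I_n} := [set x | a x != None].

Definition in_I n (a : pmap n) : bool :=
  [forall x, forall y, ((x \in dom a) && (a x == a y)) ==> (x == y)].

Definition in_AI n (a : pmap n) : bool :=
  in_I a &&
  [exists s : 'S_n, ~~ odd_perm s && [forall x in dom a, a x == Some (s x)]].

Definition in_POI n (a : pmap n) : bool :=
  in_I a &&
  [forall x, forall y, forall u, forall v,
     [&& a x == Some u, a y == Some v & (x <= y)%N] ==> (u <= v)%N].

Definition AO n : {set pmap n} := [set a | in_AI a && in_POI a].

(* An order-preserving partial injection of a chain is determined by its domain
   and its image, and any two subsets of the same size are the domain and image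
   of one; hence |POI_n| = sum_k C(n,k)^2 = C(2n,n).  A partial injection whose
   domain misses two or more points extends to a permutation whose parity can be
   fixed by a transposition of two missing points; a total element of POI_n is
   the identity.
   If the domain misses exactly i and the image exactly j, the only permutation
   extending it is [lift_perm i j 1], of parity i + j.  So POI_n \ AO_n is in
   bijection with the pairs (i, j) with i + j odd, of which there are
   floor(n^2/2). *)

From mathcomp Require Import all_boot all_order all_fingroup zify.
Set Implicit Arguments. Unset Strict Implicit. Unset Printing Implicit Defensive.

Lemma imset_perm_setC1 (T : finType) (s : {perm T}) i : s @: [set~ i] = [set~ s i].
Proof.
apply/eqP; rewrite eqEcard card_imset ?cardsC1 ?leqnn ?andbT; last exact: perm_inj.
by apply/subsetP => _ /imsetP [x xi ->]; rewrite !in_setC1 (inj_eq perm_inj) -in_setC1.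
Qed.

Lemma perm_eq_setC1 (T : finType) (s t : {perm T}) i : {in [set~ i], s =1 t} -> s = t.
Proof.
move=> st; apply/permP => x.
case: (eqVneq x i) => [->|xi]; last by apply: st; rewrite in_setC1.
set y := (t^-1)%g (s i); have yi : y = i.
  apply/eqP/negPn/negP => yi; have := st y; rewrite in_setC1 yi permKV.
  by move=> /(_ isT) /perm_inj yi'; rewrite yi' eqxx in yi.
by rewrite -[in RHS]yi permKV.
Qed.

Section PartialInjections.
Variable n : nat.
Implicit Types (a b : pmap n) (A B D : {set 'I_n}) (f : 'I_n -> 'I_n).

Definition img a : {set 'I_n} := [set y | [exists x, a x == Some y]].

Lemma in_dom a x : (x \in dom a) = (a x != None).
Proof. by rewrite inE. Qed.

Lemma imgP a y : reflect (exists x, a x = Some y) (y \in img a).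
Proof. by rewrite inE; apply: (iffP existsP) => -[x /eqP]; exists x. Qed.

Lemma in_I_inj a (x y : 'I_n) : in_I a -> x \in dom a -> a x = a y -> x = y.
Proof.
move=> /forallP/(_ x)/forallP/(_ y) aI xa axy; apply/eqP.
by move: aI; rewrite xa axy eqxx.
Qed.

Lemma in_POI_I a : in_POI a -> in_I a.
Proof. by case/andP. Qed.

Lemma in_POI_homo a (x y u v : 'I_n) :
  in_POI a -> a x = Some u -> a y = Some v -> x <= y -> u <= v.
Proof.
case/andP=> _ /forallP/(_ x)/forallP/(_ y)/forallP/(_ u)/forallP/(_ v) aP ax ay xy.
by move: aP; rewrite ax ay xy !eqxx.
Qed.

Lemma card_img a : in_I a -> #|img a| = #|dom a|.
Proof.
move=> aI; have -> : img a = [set odflt x (a x) | x in dom a].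
  apply/setP => y; apply/imgP/imsetP => [[x ax]|[x]].
    by exists x; rewrite ?in_dom ax.
  by rewrite in_dom; case ax: (a x) => [u|] //= _ ->; exists x.
apply: card_in_imset => x y; rewrite !in_dom.
case ax: (a x) => [u|] //; case ay: (a y) => [v|] //= _ _ uv.
by apply: (in_I_inj aI); rewrite ?in_dom ax ?ay ?uv.
Qed.

(* At the least point where [a] and [b] differ, the smaller of the two values
   would have to be taken by the other map at a later point. *)
Lemma POI_le_at a b (x u v : 'I_n) : in_POI a -> in_POI b -> img a = img b ->
  (forall y : 'I_n, y < x -> a y = b y) -> a x = Some u -> b x = Some v -> v <= u.
Proof.
move=> aP bP ab below ax bx; have : u \in img b by rewrite -ab; apply/imgP; exists x.
case/imgP=> y bu; case: (ltnP y x) => [yx|xy]; last exact: in_POI_homo bP bx bu xy.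
have ayx : a y = a x by rewrite below // bu ax.
have := in_I_inj (in_POI_I aP) _ ayx; rewrite in_dom ayx ax => /(_ isT) eyx.
by move: yx; rewrite eyx ltnn.
Qed.

Lemma POI_dom_img_inj a b : in_POI a -> in_POI b -> dom a = dom b -> img a = img b ->
  a = b.
Proof.
move=> aP bP dab iab.
suff ind k (x : 'I_n) : val x = k -> a x = b x by apply/ffunP => x; exact: ind.
elim/ltn_ind: k x => k IH x xk.
have below (y : 'I_n) : y < x -> a y = b y by rewrite xk => yx; exact: IH yx _ erefl.
have := congr1 (fun D => x \in D) dab; rewrite /= !in_dom.
case ax: (a x) => [u|]; case bx: (b x) => [v|] //= _.
have vu := POI_le_at aP bP iab below ax bx.
have uv := POI_le_at bP aP (esym iab) (fun y yx => esym (below y yx)) bx ax.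
by congr Some; apply/val_inj/eqP; rewrite eqn_leq uv vu.
Qed.

Definition restr f D : pmap n := [ffun x => if x \in D then Some (f x) else None].

Lemma dom_restr f D : dom (restr f D) = D.
Proof. by apply/setP => x; rewrite in_dom ffunE; case: (x \in D). Qed.

Lemma img_restr f D : img (restr f D) = f @: D.
Proof.
apply/setP => y; apply/imgP/imsetP => [[x]|[x xD ->]].
  by rewrite ffunE; case: ifP => // xD [<-]; exists x.
by exists x; rewrite ffunE xD.
Qed.

Lemma restr_I f D : {in D &, injective f} -> in_I (restr f D).
Proof.
move=> f_inj; apply/forallP => x; apply/forallP => y; apply/implyP.
rewrite in_dom !ffunE; case: ifP => // xD; case: ifP => //= yD /eqP [fxy].
by rewrite (f_inj x y xD yD fxy).
Qed.

Lemma restr_POI f D : {in D &, injective f} -> {in D &, {homo f : x y / x <= y}} ->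
  in_POI (restr f D).
Proof.
move=> f_inj f_homo; rewrite /in_POI restr_I //=.
apply/forallP => x; apply/forallP => y; apply/forallP => u; apply/forallP => v.
apply/implyP; rewrite !ffunE; case: ifP => xD; case: ifP => yD; rewrite ?andbF //.
by case/and3P => /eqP [<-] /eqP [<-]; apply: f_homo.
Qed.

Lemma restr_AI (s : {perm 'I_n}) D : ~~ odd_perm s -> in_AI (restr s D).
Proof.
move=> s_even; rewrite /in_AI restr_I /=; last by move=> x y _ _; apply: perm_inj.
apply/existsP; exists s; rewrite s_even /=.
by apply/forallP => x; apply/implyP; rewrite dom_restr ffunE => ->.
Qed.

Lemma restr_setC1_AI (s : {perm 'I_n}) i : in_AI (restr s [set~ i]) = ~~ odd_perm s.
Proof.
apply/idP/idP => [|]; last exact: restr_AI.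
case/andP => _ /existsP [t /andP [t_even /forallP ts]].
suff -> : s = t by [].
apply: (@perm_eq_setC1 _ _ _ i) => x xi.
by move: (ts x); rewrite dom_restr xi ffunE xi => /eqP [].
Qed.

(* Sends the k-th element of [A] to the k-th element of [B]; the default [x] of
   [nth] only matters off [A]. *)
Definition ord_bij A B x : 'I_n := nth x (enum B) (index x (enum A)).

Lemma sorted_enum_set A : sorted (fun x y : 'I_n => x < y) (enum A).
Proof.
rewrite /enum_mem -enumT; apply: sorted_filter; first by move=> y x z; apply: ltn_trans.
by rewrite -(sorted_map (f := val) (e' := ltn)) val_enum_ord iota_ltn_sorted.
Qed.

Section OrderBijection.
Variables A B : {set 'I_n}.
Hypothesis eqAB : #|A| = #|B|.

Lemma index_enum_lt x : x \in A -> index x (enum A) < size (enum B).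
Proof. by move=> xA; rewrite -cardE -eqAB cardE index_mem mem_enum. Qed.

Lemma ord_bij_mem x : x \in A -> ord_bij A B x \in B.
Proof. by move=> xA; rewrite -mem_enum mem_nth ?index_enum_lt. Qed.

Lemma ord_bij_inj : {in A &, injective (ord_bij A B)}.
Proof.
move=> x y xA yA /eqP; rewrite /ord_bij [nth y _ _](set_nth_default x) ?index_enum_lt //.
rewrite nth_uniq ?enum_uniq ?index_enum_lt // => /eqP ixy.
by rewrite -(nth_index x (s := enum A) (x := x)) ?mem_enum // ixy nth_index ?mem_enum.
Qed.

Lemma ord_bij_homo : {in A &, {homo ord_bij A B : x y / x <= y}}.
Proof.
move=> x y xA yA xy; have ixy : index x (enum A) <= index y (enum A).
  rewrite leqNgt; apply/negP.
  move=> /(sorted_ltn_index (fun y x z : 'I_n => @ltn_trans y x z) (sorted_enum_set A)).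
  by rewrite !mem_enum => /(_ yA xA); rewrite ltnNge xy.
have le_sorted : sorted (fun u v : 'I_n => u <= v) (enum B).
  by apply: sub_sorted (sorted_enum_set B) => u v /ltnW.
rewrite /ord_bij [nth y _ _](set_nth_default x) ?index_enum_lt //.
by apply: (sorted_leq_nth (fun y x z : 'I_n => @leq_trans y x z) (fun x : 'I_n => leqnn x));
  rewrite ?inE ?index_enum_lt.
Qed.

Lemma ord_bij_img : ord_bij A B @: A = B.
Proof.
apply/eqP; rewrite eqEcard card_in_imset ?eqAB; last exact: ord_bij_inj.
by rewrite leqnn andbT; apply/subsetP => _ /imsetP [x xA ->]; apply: ord_bij_mem.
Qed.

End OrderBijection.

Lemma in_I_extends a : in_I a ->
  exists s : {perm 'I_n}, forall x, x \in dom a -> a x = Some (s x).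
Proof.
move=> aI; have eqC : #|~: dom a| = #|~: img a|.
  by apply/eqP; rewrite -(eqn_add2l #|dom a|) cardsC -(card_img aI) cardsC.
pose f x := if x \in dom a then odflt x (a x) else ord_bij (~: dom a) (~: img a) x.
have fD x : x \in dom a -> a x = Some (f x).
  by rewrite /f in_dom => xD; rewrite xD; case: (a x) xD.
have f_img x : (f x \in img a) = (x \in dom a).
  case xD: (x \in dom a); first by apply/imgP; exists x; apply: fD.
  by apply/negbTE; rewrite -in_setC /f xD ord_bij_mem // in_setC xD.
have f_inj : injective f.
  move=> x y fxy; have := f_img x; rewrite fxy f_img.
  case xD: (x \in dom a) => yD.
    by apply: (in_I_inj aI xD); rewrite !fD ?yD ?fxy.
  by move: fxy; rewrite /f xD yD; apply: ord_bij_inj; rewrite // in_setC ?xD ?yD.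
by exists (perm f_inj) => x xD; rewrite permE fD.
Qed.

(* Two points outside the domain leave room to correct the parity. *)
Lemma in_AI_small a : in_I a -> #|dom a| + 2 <= n -> in_AI a.
Proof.
move=> aI small; rewrite /in_AI aI /=.
have [s sa] := in_I_extends aI.
have [u [v [uD vD uv]]] : exists u v, [/\ u \notin dom a, v \notin dom a & u != v].
  have : 1 < #|~: dom a| by have := cardsC (dom a); rewrite card_ord; lia.
  by case/card_gt1P => u [v [uD vD uv]]; exists u, v; rewrite -!in_setC.
have [t t_even ta] : exists2 t : {perm 'I_n},
    ~~ odd_perm t & forall x, x \in dom a -> a x = Some (t x).
  case s_odd: (odd_perm s); last by exists s; rewrite ?s_odd.
  exists (tperm u v * s)%g; first by rewrite odd_mul_tperm uv s_odd.
  move=> x xD; rewrite permM tpermD ?sa //.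
    by apply: contraNneq uD => ->.
  by apply: contraNneq vD => ->.
apply/existsP; exists t; rewrite t_even.
by apply/forallP => x; apply/implyP => xD; rewrite ta.
Qed.

Definition POI : {set pmap n} := [set a | in_POI a].

Definition eq_card_pairs := [set p : {set 'I_n} * {set 'I_n} | #|p.1| == #|p.2|].

Lemma card_POI : #|POI| = #|eq_card_pairs|.
Proof.
rewrite -(card_in_imset (f := fun a => (dom a, img a))); last first.
  by move=> a b; rewrite !inE => aP bP [dab iab]; apply: POI_dom_img_inj.
congr #|pred_of_set _|; apply/setP => -[A B]; rewrite inE /=.
apply/imsetP/eqP => [[a aP [-> ->]]|eqAB].
  by rewrite card_img // in_POI_I // -inE.
exists (restr (ord_bij A B) A); last by rewrite dom_restr img_restr ord_bij_img.
by rewrite inE restr_POI //; [apply: ord_bij_inj | apply: ord_bij_homo].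
Qed.

Lemma card_eq_card_pairs : #|eq_card_pairs| = 'C(n.*2, n).
Proof.
have -> : #|eq_card_pairs| = \sum_(A : {set 'I_n}) 'C(n, #|A|).
  transitivity (\sum_(A : {set 'I_n}) \sum_(B : {set 'I_n} | #|A| == #|B|) 1).
    by rewrite pair_big_dep -sum1_card; apply: eq_bigl => -[A B]; rewrite inE.
  apply: eq_bigr => A _; rewrite sum1_card; have := card_draws 'I_n #|A|.
  rewrite card_ord => <-.
  by apply: eq_card => B; rewrite !inE eq_sym.
rewrite (partition_big (fun A : {set 'I_n} => inord #|A| : 'I_n.+1) xpredT) //=.
rewrite -addnn -Vandermonde; apply: eq_bigr => k _.
have cardA (A : {set 'I_n}) : #|A| < n.+1 by rewrite ltnS -[n in _ <= n]card_ord max_card.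
rewrite bin_sub -1?ltnS // (eq_bigl (fun A => #|A| == k)) => [|A]; last first.
  by rewrite -val_eqE /= inordK.
rewrite (eq_bigr (fun _ => 'C(n, k))) => [|A /eqP -> //].
rewrite sum_nat_const; congr (_ * _); have := card_draws 'I_n k.
by rewrite card_ord => <-; apply: eq_card => A; rewrite inE.
Qed.

Lemma POI_eq_restr a (s : {perm 'I_n}) D : in_POI a -> {in D &, {homo s : x y / x <= y}} ->
  dom a = D -> img a = s @: D -> a = restr s D.
Proof.
move=> aP s_homo aD aI; apply: POI_dom_img_inj; rewrite ?dom_restr ?img_restr //.
by apply: restr_POI => // x y _ _; apply: perm_inj.
Qed.

Lemma POI_full_AI a : in_POI a -> dom a = setT -> in_AI a.
Proof.
move=> aP aT; suff -> : a = restr (1%g : {perm 'I_n}) setT.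
  by apply: restr_AI; rewrite odd_perm1.
apply: POI_eq_restr => //; first by move=> x y _ _; rewrite !perm1.
rewrite (eq_imset _ (@perm1 _)) imset_id; apply/eqP.
by rewrite eqEcard subsetT card_img ?in_POI_I // aT leqnn.
Qed.

End PartialInjections.

Lemma lift_perm1_homo n (i j : 'I_n.+1) :
  {in [set~ i] &, {homo lift_perm i j 1 : x y / x <= y}}.
Proof.
move=> x y; rewrite !in_setC1 !(eq_sym _ i).
case/unlift_some => x' -> _; case/unlift_some => y' -> _.
by rewrite !lift_perm_lift !perm1 /= !leq_bump2.
Qed.

Lemma odd_lift_perm1 n (i j : 'I_n.+1) : odd_perm (lift_perm i j 1) = odd (i + j).
Proof. by rewrite odd_lift_perm odd_perm1 addbF oddD. Qed.

Lemma POI_not_AI n (a : pmap n.+1) : in_POI a -> ~~ in_AI a ->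
  exists i j, a = restr (lift_perm i j 1) [set~ i].
Proof.
move=> aP aAI; have aI := in_POI_I aP.
have : #|~: dom a| <= 1.
  have : n <= #|dom a| by apply: contraNleq aAI => small; apply: in_AI_small => //; lia.
  by have := cardsC (dom a); rewrite card_ord; lia.
rewrite leq_eqVlt ltnS leqn0 cards_eq0 => /orP [/cards1P [i Di] | /eqP D0]; last first.
  by move: aAI; rewrite POI_full_AI // -[dom a]setCK D0 setC0.
have /cards1P [j Ij] : #|~: img a| == 1.
  by have := cardsC (img a); have := cardsC (dom a); rewrite card_img // Di cards1; lia.
exists i, j; apply: POI_eq_restr => //; first exact: lift_perm1_homo.
  by rewrite -[dom a]setCK Di.
by rewrite imset_perm_setC1 lift_perm_id -[img a]setCK Ij.
Qed.

Lemma count_odd_iota m : count odd (iota 0 m) = m./2.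
Proof. by elim: m => // m IH; rewrite -addn1 iotaD count_cat IH /=; lia. Qed.

Lemma card_odd_ord n : #|[set i : 'I_n | odd i]| = n./2.
Proof.
rewrite cardsE cardE /enum_mem size_filter -enumT.
by rewrite -count_odd_iota -val_enum_ord count_map.
Qed.

Definition odd_pairs n := [set p : 'I_n * 'I_n | odd (p.1 + p.2)].

Lemma card_odd_pairs n : #|odd_pairs n| = (n ^ 2)./2.
Proof.
set O := [set i : 'I_n | odd i].
have -> : odd_pairs n = setX O (~: O) :|: setX (~: O) O.
  by apply/setP => -[i j]; rewrite !inE /= oddD; case: (odd i); case: (odd j).
rewrite cardsU (_ : _ :&: _ = set0) ?cards0 ?subn0 ?cardsX; last first.
  by apply/setP => -[i j]; rewrite !inE /=; case: (odd i); rewrite /= ?andbF.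
by have := cardsC O; rewrite card_odd_ord card_ord; nia.
Qed.

Lemma POI_diff_AO n : POI n.+1 :\: AO n.+1 =
  [set restr (lift_perm p.1 p.2 1) [set~ p.1] | p in odd_pairs n.+1].
Proof.
apply/setP => a; rewrite !inE; apply/andP/imsetP => [[naO aP]|[[i j] ij ->]].
  rewrite aP andbT in naO; have [i [j a_ij]] := POI_not_AI aP naO.
  exists (i, j) => //; rewrite inE /= -odd_lift_perm1.
  by move: naO; rewrite a_ij restr_setC1_AI negbK.
have ij_POI : in_POI (restr (lift_perm i j 1) [set~ i]).
  by apply: restr_POI; [move=> x y _ _; apply: perm_inj | apply: lift_perm1_homo].
rewrite /= restr_setC1_AI odd_lift_perm1 ij_POI andbT negbK; split=> //.
by rewrite inE in ij.
Qed.

Lemma card_POI_diff_AO n : #|POI n.+1 :\: AO n.+1| = (n.+1 ^ 2)./2.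
Proof.
rewrite POI_diff_AO card_in_imset ?card_odd_pairs // => -[i j] [i' j'] _ _ /= e.
have img_lift (k l : 'I_n.+1) : img (restr (lift_perm k l 1) [set~ k]) = [set~ l].
  by rewrite img_restr imset_perm_setC1 lift_perm_id.
move: (congr1 (@dom _) e) (congr1 (@img _) e); rewrite !dom_restr !img_lift.
by move=> /setC_inj/set1_inj -> /setC_inj/set1_inj ->.
Qed.

Theorem proposition1p2 (n : nat) : 2 <= n ->
  #|AO n| = 'C(n.*2, n) - (n ^ 2)./2.
Proof.
case: n => [//|n] _.
have AO_POI : AO n.+1 \subset POI n.+1 by apply/subsetP => a; rewrite !inE => /andP [].
rewrite -card_eq_card_pairs -card_POI -card_POI_diff_AO cardsD (setIidPr AO_POI).
by rewrite subKn // subset_leq_card.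
Qed.
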